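(* For the hypergeometric weights described in the context, \[ (\vartheta H)H^{-1}=\alpha,\qquad -\phi=(\Lambda^\top)^2\gamma+\Lambda^\top\beta,\qquad -\tilde\phi=\Lambda^\top(\mathfrak a_-H)H^{-1}. \]
   Context: Weights on $\mathbb N_0$: $w^{(a)}(k)=\frac{(b^{(a)}_1)_k\cdots(b^{(a)}_{M^{(a)}})_k}{(c_1)_k\cdots(c_N)_k}\frac{(\eta^{(a)})^k}{k!}$, $a\in\{1,2\}$, convergent series. Moment matrix (indices from 0): $\mathscr M_{n,2m}=\sum_k k^{n+m}w^{(1)}(k)$, $\mathscr M_{n,2m+1}=\sum_k k^{n+m}w^{(2)}(k)$, with all leading principal minors nonzero, so $\mathscr M=S^{-1}H\tilde S^{-\top}$ ($S,\tilde S$ lower unitriangular, $H=\operatorname{diag}(H_0,H_1,\dots)$), depending on $(\eta^{(1)},\eta^{(2)})$. $\Lambda$ has ones on the first superdiagonal; $S\Lambda S^{-1}=(\Lambda^\top)^2\gamma+\Lambda^\top\beta+\alpha+\Lambda$ with diagonal $\alpha,\beta,\gamma$. $\vartheta^{(a)}=\eta^{(a)}\partial/\partial\eta^{(a)}$, $\vartheta=\vartheta^{(1)}+\vartheta^{(2)}$, $\phi=(\vartheta S)S^{-1}$, $\tilde\phi=(\vartheta\tilde S)\tilde S^{-1}$. $\mathfrak a_-\operatorname{diag}(m_0,m_1,\dots)=\operatorname{diag}(m_1,m_2,\dots)$. *)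

From Stdlib Require Import Reals.
From Coquelicot Require Import Coquelicot.
From mathcomp Require Import all_boot all_algebra.
From mathcomp Require Import Rstruct.

Open Scope R_scope.

Fixpoint poch (b : R) (k : nat) : R :=
  match k with O => 1 | S k' => poch b k' * (b + INR k') end.

Fixpoint prodR (l : list R) : R :=
  match l with nil => 1 | cons x l' => x * prodR l' end.

Definition hweight (bs cs : list R) (eta : R) (k : nat) : R :=
  prodR (List.map (fun b => poch b k) bs) / prodR (List.map (fun c => poch c k) cs)
  * eta ^ k / INR (Factorial.fact k).

Fixpoint sumR (n : nat) (f : nat -> R) : R :=
  match n with O => 0 | S n' => sumR n' f + f n' end.

(* Semi-infinite matrices, indices from 0. *)
Definition mat := nat -> nat -> R.

(* Product A B, valid (a genuine finite sum) whenever A i k = 0 for k > i+1,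
   which is the case for every left factor used below (lower triangular
   matrices, diagonal matrices, Lambda, Lambda^T, S Lambda). *)
Definition mmul (A B : mat) : mat :=
  fun i j => sumR (S (S i)) (fun k => A i k * B k j).
Definition madd (A B : mat) : mat := fun i j => A i j + B i j.
Definition mopp (A : mat) : mat := fun i j => - A i j.
Definition mid : mat := fun i j => if Nat.eqb i j then 1 else 0.
Definition diagm (d : nat -> R) : mat := fun i j => if Nat.eqb i j then d i else 0.
Definition Lam : mat := fun i j => if Nat.eqb j (S i) then 1 else 0.
Definition LamT : mat := fun i j => Lam j i.

Definition lower_unitri (A : mat) : Prop :=
  (forall i j, (i < j)%nat -> A i j = 0) /\ (forall i, A i i = 1).

Definition moment_term (w : nat -> R) (p : nat) : nat -> R :=
  fun k => INR k ^ p * w k.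
Definition Mom (b1 b2 cs : list R) (eta : R * R) : mat :=
  fun n j => if Nat.even j
             then Series (moment_term (hweight b1 cs (fst eta)) (n + Nat.div2 j))
             else Series (moment_term (hweight b2 cs (snd eta)) (n + Nat.div2 j)).

Definition trunc (A : mat) (N : nat) : 'M[R]_N :=
  \matrix_(i < N, j < N) A (nat_of_ord i) (nat_of_ord j).

(* Gauss--Borel factorization  M = S^{-1} H St^{-T}, written as
   S M St^T = H (all sums are finite since S, St are lower triangular). *)
Definition gauss_borel (M Sm St : mat) (H : nat -> R) : Prop :=
  forall n m,
    sumR (S n) (fun k => sumR (S m) (fun l => Sm n k * M k l * St m l))
    = (if Nat.eqb n m then H n else 0).

Definition theta_mat (F : R * R -> mat) (eta : R * R) : mat :=
  fun i j => fst eta * Derive (fun x => F (x, snd eta) i j) (fst eta)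
           + snd eta * Derive (fun y => F (fst eta, y) i j) (snd eta).
Definition theta_vec (F : R * R -> nat -> R) (eta : R * R) : nat -> R :=
  fun n => fst eta * Derive (fun x => F (x, snd eta) n) (fst eta)
         + snd eta * Derive (fun y => F (fst eta, y) n) (snd eta).

Definition lead_minor (A : mat) (N : nat) : R := (\det (trunc A N))%R.

From Stdlib Require Import Reals.
From Coquelicot Require Import Coquelicot.
From mathcomp Require Import all_boot all_algebra.
From mathcomp Require Import Rstruct.
From Stdlib Require Import Lra Lia FunctionalExtensionality Wf_nat.
From mathcomp Require Import zify.
Open Scope R_scope.

(* Since [theta] multiplies [eta^k] by [k], it raises the row index of the moment
   matrix, [theta M = Lam M], while the shape of the moments gives
   [Lam M = M (Lam^T)^2].  Applying [theta] to [S M St^T = H] yields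
     [phi H + J H + H phit^T = theta H],   [J = S Lam S^-1],
   where [phi] and [phit] are strictly lower triangular (logarithmic derivatives of
   unitriangular matrices), [J] is lower Hessenberg with unit superdiagonal, and
   [J H = H St^-T (Lam^T)^2 St^T] has at most two subdiagonals.  The diagonal,
   lower and upper parts of this identity are the three formulas.  The
   differentiability needed to apply [theta] to products comes from solving for
   the entries of [S], [St] and [H] by back substitution; the pivots [H n] are
   nonzero because the leading minors of [M] are. *)

(** * Finite sums and banded matrices *)

Lemma sumR_S n f : sumR (S n) f = sumR n f + f n.
Proof. reflexivity. Qed.

Lemma sumR_ext n f g :
  (forall k, (k < n)%coq_nat -> f k = g k) -> sumR n f = sumR n g.
Proof.
  induction n as [|n IH]; intros Hfg; simpl; [reflexivity|].
  rewrite IH ?Hfg; [reflexivity|lia|intros k Hk; apply Hfg; lia].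
Qed.

Lemma sumR_plus n f g : sumR n (fun k => f k + g k) = sumR n f + sumR n g.
Proof. induction n as [|n IH]; simpl; [lra|rewrite IH; lra]. Qed.

Lemma sumR_mult_l n c f : c * sumR n f = sumR n (fun k => c * f k).
Proof. induction n as [|n IH]; simpl; [lra|rewrite -IH; lra]. Qed.

Lemma sumR_mult_r n c f : sumR n f * c = sumR n (fun k => f k * c).
Proof. induction n as [|n IH]; simpl; [lra|rewrite -IH; lra]. Qed.

Lemma sumR_eq0 n f : (forall k, (k < n)%coq_nat -> f k = 0) -> sumR n f = 0.
Proof.
  induction n as [|n IH]; intros Hf; simpl; [reflexivity|].
  rewrite IH ?Hf; [lra|lia|intros k Hk; apply Hf; lia].
Qed.

Lemma sumR_pad n m f : (n <= m)%coq_nat ->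
  (forall k, (n <= k)%coq_nat -> (k < m)%coq_nat -> f k = 0) -> sumR m f = sumR n f.
Proof.
  induction m as [|m IH]; intros Hnm Hf.
  - replace n with 0%nat by lia. reflexivity.
  - destruct (Nat.eq_dec n (S m)) as [->|Hne]; [reflexivity|].
    rewrite sumR_S IH ?Hf; [lra|lia|lia|lia|intros k Hk1 Hk2; apply Hf; lia].
Qed.

Lemma sumR_swap n m (f : nat -> nat -> R) :
  sumR n (fun i => sumR m (fun j => f i j)) = sumR m (fun j => sumR n (fun i => f i j)).
Proof.
  induction n as [|n IH]; simpl.
  - symmetry; apply sumR_eq0; reflexivity.
  - rewrite IH -sumR_plus. reflexivity.
Qed.

Lemma sumR_single n j f : (j < n)%coq_nat ->
  (forall k, (k < n)%coq_nat -> k <> j -> f k = 0) -> sumR n f = f j.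
Proof.
  induction n as [|n IH]; intros Hj Hf; [lia|]. rewrite sumR_S.
  destruct (Nat.eq_dec j n) as [->|Hne].
  - rewrite sumR_eq0; [lra|]. intros k Hk; apply Hf; lia.
  - rewrite IH ?(Hf n); [lra|lia|lia|lia|intros k Hk; apply Hf; lia].
Qed.

Lemma sumR_split_at N m f : (m < N)%coq_nat -> (forall k, (k < m)%coq_nat -> f k = 0) ->
  sumR N f = sumR N (fun k => if Nat.ltb m k then f k else 0) + f m.
Proof.
  intros Hm Hf.
  rewrite (sumR_ext N f (fun k => (if Nat.ltb m k then f k else 0)
                                 + (if Nat.eqb k m then f k else 0))).
  - rewrite sumR_plus (sumR_single N m (fun k => if Nat.eqb k m then f k else 0)) //.
    + rewrite Nat.eqb_refl. reflexivity.
    + intros k _ Hk. apply Nat.eqb_neq in Hk. rewrite Hk. reflexivity.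
  - intros k _. destruct (Nat.ltb_spec m k); destruct (Nat.eqb_spec k m); try lia.
    + lra.
    + subst; lra.
    + rewrite Hf; [lra|lia].
Qed.

Lemma big_sumR N (f : nat -> R) : (\sum_(k < N) f k)%R = sumR N f.
Proof.
  induction N as [|N IH]; [by rewrite big_ord0|].
  by rewrite big_ord_recr /= IH.
Qed.

Definition lower_tri (X : mat) : Prop := forall i k, (i < k)%coq_nat -> X i k = 0.
Definition strictly_lower_tri (X : mat) : Prop := forall i k, (i <= k)%coq_nat -> X i k = 0.
Definition lower_hessenberg (X : mat) : Prop := forall i k, (S i < k)%coq_nat -> X i k = 0.

Lemma lower_tri_lower_hessenberg X : lower_tri X -> lower_hessenberg X.
Proof. intros HX i k Hik; apply HX; lia. Qed.

Lemma strictly_lower_tri_lower X : strictly_lower_tri X -> lower_tri X.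
Proof. intros HX i k Hik; apply HX; lia. Qed.

Lemma lower_unitri_lower T : lower_unitri T -> lower_tri T.
Proof. intros [HT _] i k Hik. apply HT. apply/ltP. exact Hik. Qed.

Lemma mid_diag i : mid i i = 1.
Proof. unfold mid; rewrite Nat.eqb_refl; reflexivity. Qed.

Lemma mid_offdiag i j : i <> j -> mid i j = 0.
Proof. intros Hij; unfold mid; apply Nat.eqb_neq in Hij; rewrite Hij; reflexivity. Qed.

Lemma diagm_offdiag d i j : i <> j -> diagm d i j = 0.
Proof. intros Hij; unfold diagm; apply Nat.eqb_neq in Hij; rewrite Hij; reflexivity. Qed.

Lemma mmul_last_zero X Y i j : X i (S i) = 0 ->
  mmul X Y i j = sumR (S i) (fun k => X i k * Y k j).
Proof. intros HX. unfold mmul. rewrite sumR_S HX. lra. Qed.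

(* The product is a finite sum truncated at column [S i] of the left factor, so
   associativity needs the three matrices below to vanish beyond that column. *)
Lemma mmul_assoc X Y Z :
  lower_hessenberg X -> lower_hessenberg Y -> lower_hessenberg (mmul X Y) ->
  mmul (mmul X Y) Z = mmul X (mmul Y Z).
Proof.
  intros HX HY HXY. extensionality i. extensionality j.
  transitivity (sumR (S (S (S i))) (fun k => mmul X Y i k * Z k j)).
  { symmetry. apply sumR_pad; [lia|]. intros k Hk1 Hk2. rewrite HXY; [lra|lia]. }
  unfold mmul.
  rewrite (sumR_ext _ _ (fun k => sumR (S (S i)) (fun l => X i l * (Y l k * Z k j)))).
  2:{ intros k _. rewrite sumR_mult_r. apply sumR_ext. intros; lra. }
  rewrite sumR_swap. apply sumR_ext. intros l Hl. rewrite sumR_mult_l.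
  apply sumR_pad; [lia|]. intros k Hk _. rewrite HY; [lra|lia].
Qed.

Lemma lower_tri_mmul X Y : lower_tri X -> lower_tri Y -> lower_tri (mmul X Y).
Proof.
  intros HX HY i k Hik. apply sumR_eq0. intros l Hl.
  destruct (Nat.le_gt_cases l i); [rewrite (HY l k)|rewrite (HX i l)]; lra || lia.
Qed.

Lemma strictly_lower_tri_mmul X Y :
  strictly_lower_tri X -> lower_tri Y -> strictly_lower_tri (mmul X Y).
Proof.
  intros HX HY i k Hik. apply sumR_eq0. intros l Hl.
  destruct (Nat.le_gt_cases i l); [rewrite HX|rewrite (HY l k)]; lra || lia.
Qed.

Lemma lower_hessenberg_mmul_lower X Y : lower_tri Y -> lower_hessenberg (mmul X Y).
Proof. intros HY i k Hik. apply sumR_eq0. intros l Hl. rewrite (HY l k); lra || lia. Qed.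

Lemma lower_hessenberg_madd X Y :
  lower_hessenberg X -> lower_hessenberg Y -> lower_hessenberg (madd X Y).
Proof. intros HX HY i k Hk. unfold madd. rewrite HX ?HY //. lra. Qed.

Lemma lower_hessenberg_Lam : lower_hessenberg Lam.
Proof. intros i k Hik. unfold Lam. destruct (Nat.eqb_spec k (S i)); [lia|reflexivity]. Qed.

Lemma lower_hessenberg_LamT : lower_hessenberg LamT.
Proof. intros i k Hik. unfold LamT, Lam. destruct (Nat.eqb_spec i (S k)); [lia|reflexivity]. Qed.

Lemma lower_hessenberg_mmul_Lam X : lower_tri X -> lower_hessenberg (mmul X Lam).
Proof.
  intros HX i k Hik. apply sumR_eq0. intros l Hl. unfold Lam.
  destruct (Nat.eqb_spec k (S l)); [rewrite HX|]; lra || lia.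
Qed.

Lemma mmul_1l X : mmul mid X = X.
Proof.
  extensionality i; extensionality j. unfold mmul.
  rewrite (sumR_single _ i) ?mid_diag; [lra|lia|].
  intros k _ Hk. rewrite mid_offdiag; [lra|lia].
Qed.

Lemma mmul_Lam_l X i j : mmul Lam X i j = X (S i) j.
Proof.
  unfold mmul, Lam. rewrite (sumR_single _ (S i)) ?Nat.eqb_refl; [lra|lia|].
  intros k _ Hk. apply Nat.eqb_neq in Hk. rewrite Hk. lra.
Qed.

Lemma mmul_LamT_l X i j : mmul LamT X i j = match i with O => 0 | S i' => X i' j end.
Proof.
  unfold mmul, LamT, Lam. destruct i as [|i'].
  - apply sumR_eq0. intros k _. simpl. lra.
  - rewrite (sumR_single _ i') ?Nat.eqb_refl; [lra|lia|].
    intros k _ Hk. rewrite (proj2 (Nat.eqb_neq _ _)); [lra|lia].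
Qed.

Lemma mmul_diagm d1 d2 : mmul (diagm d1) (diagm d2) = diagm (fun i => d1 i * d2 i).
Proof.
  extensionality i; extensionality j. unfold mmul.
  rewrite (sumR_single _ i); [|lia|].
  - unfold diagm. rewrite Nat.eqb_refl. destruct (Nat.eqb i j); lra.
  - intros k _ Hk. rewrite diagm_offdiag; [lra|auto].
Qed.

Lemma mmul_diagm_r X d i j : lower_hessenberg X -> mmul X (diagm d) i j = X i j * d j.
Proof.
  intros HX. unfold mmul. destruct (Nat.lt_ge_cases (S i) j) as [Hj|Hj].
  - rewrite HX; [|lia]. rewrite Rmult_0_l. apply sumR_eq0. intros k Hk.
    rewrite diagm_offdiag; [lra|lia].
  - rewrite (sumR_single _ j); [|lia|].
    + unfold diagm. rewrite Nat.eqb_refl. reflexivity.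
    + intros k _ Hk. rewrite diagm_offdiag; [lra|auto].
Qed.

Lemma mmul_maddl X Y Z : mmul (madd X Y) Z = madd (mmul X Z) (mmul Y Z).
Proof.
  extensionality i; extensionality j. unfold mmul, madd. rewrite -sumR_plus.
  apply sumR_ext. intros; lra.
Qed.

Lemma mmul_1r X : lower_hessenberg X -> mmul X mid = X.
Proof.
  intros HX. extensionality i; extensionality j. unfold mmul.
  destruct (Nat.lt_ge_cases (S i) j) as [Hj|Hj].
  - rewrite HX; [|lia]. apply sumR_eq0. intros k Hk. rewrite mid_offdiag; [lra|lia].
  - rewrite (sumR_single _ j) ?mid_diag; [lra|lia|].
    intros k _ Hk. rewrite mid_offdiag; [lra|lia].
Qed.

Lemma mmul_lower_unitri_row T X i j : lower_unitri T ->
  mmul T X i j = sumR i (fun k => T i k * X k j) + X i j.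
Proof.
  intros HT. rewrite mmul_last_zero; [|apply (lower_unitri_lower _ HT); lia].
  rewrite sumR_S (proj2 HT). lra.
Qed.

Lemma lower_unitri_mmul_inj T X Y : lower_unitri T -> mmul T X = mmul T Y -> X = Y.
Proof.
  intros HT HXY. extensionality i. induction i as [i IH] using lt_wf_ind. extensionality j.
  pose proof (f_equal (fun Z => Z i j) HXY) as E. cbv beta in E.
  rewrite !mmul_lower_unitri_row // in E.
  rewrite (sumR_ext _ _ (fun k => T i k * Y k j)) in E; [lra|].
  intros k Hk. rewrite IH //.
Qed.

Lemma lower_unitri_rinv T K : lower_unitri T -> mmul T K = mid -> lower_unitri K.
Proof.
  intros HT HTK.
  assert (HK : forall i, (forall j, (i < j)%coq_nat -> K i j = 0) /\ K i i = 1).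
  { intro i. induction i as [i IH] using lt_wf_ind.
    assert (E : forall j, K i j = mid i j - sumR i (fun k => T i k * K k j)).
    { intro j. rewrite -HTK mmul_lower_unitri_row //. lra. }
    split.
    - intros j Hj. rewrite E mid_offdiag ?sumR_eq0; [lra| |lia].
      intros k Hk. rewrite (proj1 (IH k Hk) j); [lra|lia].
    - rewrite E mid_diag sumR_eq0; [lra|].
      intros k Hk. rewrite (proj1 (IH k Hk) i); [lra|lia]. }
  split; [intros i j Hij; apply (proj1 (HK i)); apply/ltP; exact Hij|].
  intro i. exact (proj2 (HK i)).
Qed.

Lemma lower_unitri_inv T K : lower_unitri T -> mmul T K = mid ->
  lower_unitri K /\ mmul K T = mid.
Proof.
  intros HT HTK. pose proof (lower_unitri_rinv T K HT HTK) as HK. split; [exact HK|].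
  pose proof (lower_tri_lower_hessenberg _ (lower_unitri_lower _ HT)) as HTh.
  apply (lower_unitri_mmul_inj T); [exact HT|].
  rewrite -mmul_assoc.
  - rewrite HTK mmul_1l mmul_1r //.
  - exact HTh.
  - apply lower_tri_lower_hessenberg, lower_unitri_lower, HK.
  - rewrite HTK. apply lower_tri_lower_hessenberg. intros i k Hik. apply mid_offdiag. lia.
Qed.

(** * The Euler operator *)

Definition ex_theta (f : R * R -> R) (e : R * R) : Prop :=
  ex_derive (fun x => f (x, snd e)) (fst e) /\ ex_derive (fun y => f (fst e, y)) (snd e).

Definition theta (f : R * R -> R) (e : R * R) : R :=
  fst e * Derive (fun x => f (x, snd e)) (fst e) + snd e * Derive (fun y => f (fst e, y)) (snd e).

Lemma ex_theta_const c e : ex_theta (fun _ => c) e.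
Proof. split; apply ex_derive_const. Qed.

Lemma theta_const c e : theta (fun _ => c) e = 0.
Proof. unfold theta. rewrite !Derive_const. lra. Qed.

Lemma ex_theta_plus f g e : ex_theta f e -> ex_theta g e -> ex_theta (fun e => f e + g e) e.
Proof. intros [Hf1 Hf2] [Hg1 Hg2]; split; apply: ex_derive_plus; auto. Qed.

Lemma theta_plus f g e : ex_theta f e -> ex_theta g e ->
  theta (fun e => f e + g e) e = theta f e + theta g e.
Proof.
  intros [Hf1 Hf2] [Hg1 Hg2]; unfold theta.
  rewrite (Derive_plus (fun x : R => f (x, snd e)) (fun x : R => g (x, snd e))) //.
  rewrite (Derive_plus (fun y : R => f (fst e, y)) (fun y : R => g (fst e, y))) //. ring.
Qed.

Lemma ex_theta_mult f g e : ex_theta f e -> ex_theta g e -> ex_theta (fun e => f e * g e) e.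
Proof. intros [Hf1 Hf2] [Hg1 Hg2]; split; apply: ex_derive_mult; auto. Qed.

Lemma theta_mult f g e : ex_theta f e -> ex_theta g e ->
  theta (fun e => f e * g e) e = theta f e * g e + f e * theta g e.
Proof.
  intros [Hf1 Hf2] [Hg1 Hg2]; unfold theta.
  rewrite (Derive_mult (fun x : R => f (x, snd e)) (fun x : R => g (x, snd e))) //.
  rewrite (Derive_mult (fun y : R => f (fst e, y)) (fun y : R => g (fst e, y))) //.
  destruct e; simpl. lra.
Qed.

Lemma ex_theta_opp f e : ex_theta f e -> ex_theta (fun e => - f e) e.
Proof. intros [Hf1 Hf2]; split; apply: ex_derive_opp; auto. Qed.

Lemma ex_theta_inv f e : ex_theta f e -> f e <> 0 -> ex_theta (fun e => / f e) e.
Proof. intros [Hf1 Hf2] Hf0; destruct e as [x y]; split; apply: ex_derive_inv; auto. Qed.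

Lemma ex_theta_sumR n (f : nat -> R * R -> R) e :
  (forall k, (k < n)%coq_nat -> ex_theta (f k) e) -> ex_theta (fun e => sumR n (fun k => f k e)) e.
Proof.
  induction n as [|n IH]; intros Hf; simpl.
  - apply ex_theta_const.
  - apply ex_theta_plus; [apply IH; intros k Hk|]; apply Hf; lia.
Qed.

Lemma theta_sumR n (f : nat -> R * R -> R) e :
  (forall k, (k < n)%coq_nat -> ex_theta (f k) e) ->
  theta (fun e => sumR n (fun k => f k e)) e = sumR n (fun k => theta (f k) e).
Proof.
  induction n as [|n IH]; intros Hf; simpl.
  - apply theta_const.
  - rewrite theta_plus ?IH; [reflexivity|intros k Hk|apply ex_theta_sumR; intros k Hk|];
      apply Hf; lia.
Qed.

Section OpenSet.
Variable U : R * R -> Prop.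
Hypothesis HU : open U.

Lemma open_locally_fst e : U e -> locally (fst e) (fun x => U (x, snd e)).
Proof.
  intros He. destruct (HU e He) as [eps Heps]. exists eps. intros x Hx.
  apply Heps. split; [exact Hx|apply ball_center].
Qed.

Lemma open_locally_snd e : U e -> locally (snd e) (fun y => U (fst e, y)).
Proof.
  intros He. destruct (HU e He) as [eps Heps]. exists eps. intros y Hy.
  apply Heps. split; [apply ball_center|exact Hy].
Qed.

Lemma ex_theta_ext_open f g e : U e -> (forall e', U e' -> f e' = g e') ->
  ex_theta g e -> ex_theta f e.
Proof.
  intros He Hfg [Hg1 Hg2]; split.
  - apply: ex_derive_ext_loc Hg1. apply: filter_imp (open_locally_fst e He).
    intros x Hx. symmetry. apply Hfg, Hx.
  - apply: ex_derive_ext_loc Hg2. apply: filter_imp (open_locally_snd e He).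
    intros y Hy. symmetry. apply Hfg, Hy.
Qed.

Lemma theta_ext_open f g e : U e -> (forall e', U e' -> f e' = g e') -> theta f e = theta g e.
Proof.
  intros He Hfg. unfold theta. f_equal; f_equal; apply Derive_ext_loc.
  - apply: filter_imp (open_locally_fst e He). intros x Hx. apply Hfg, Hx.
  - apply: filter_imp (open_locally_snd e He). intros y Hy. apply Hfg, Hy.
Qed.

Definition ex_theta_on (f : R * R -> R) : Prop := forall e, U e -> ex_theta f e.

Lemma theta_lower_unitri (F : R * R -> mat) e : U e ->
  (forall e', U e' -> lower_unitri (F e')) -> strictly_lower_tri (theta_mat F e).
Proof.
  intros He HF i k Hik. change (theta (fun e => F e i k) e = 0).
  destruct (Nat.eq_dec i k) as [<-|Hne].
  - rewrite (theta_ext_open _ (fun _ => 1) e He) ?theta_const //.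
    intros e' He'. exact (proj2 (HF e' He') i).
  - rewrite (theta_ext_open _ (fun _ => 0) e He) ?theta_const //.
    intros e' He'. apply (lower_unitri_lower _ (HF e' He')). lia.
Qed.

Lemma strictly_lower_theta_mmul_inv (F Finv : R * R -> mat) e : U e ->
  (forall e', U e' -> lower_unitri (F e')) -> mmul (F e) (Finv e) = mid ->
  strictly_lower_tri (mmul (theta_mat F e) (Finv e)).
Proof.
  intros He HF HFinv. apply strictly_lower_tri_mmul; [apply theta_lower_unitri; auto|].
  exact (lower_unitri_lower _ (proj1 (lower_unitri_inv _ _ (HF e He) HFinv))).
Qed.

Lemma ex_theta_back_substitution (x : nat -> R * R -> R) (c : nat -> nat -> R * R -> R)
    (h : nat -> R * R -> R) N :
  (forall e, U e -> x N e = 1) ->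
  (forall m e, (m < N)%coq_nat -> U e ->
     x m e * h m e = - sumR (S N) (fun k => if Nat.ltb m k then x k e * c k m e else 0)) ->
  (forall m, (m < N)%coq_nat -> ex_theta_on (h m) /\ forall e, U e -> h m e <> 0) ->
  (forall k m, (m < k)%coq_nat -> (k <= N)%coq_nat -> ex_theta_on (c k m)) ->
  forall m, (m <= N)%coq_nat -> ex_theta_on (x m).
Proof.
  intros HxN Hrec Hh Hc.
  assert (Hd : forall d m, (N <= m + d)%coq_nat -> (m <= N)%coq_nat -> ex_theta_on (x m)).
  { induction d as [|d IH]; intros m Hmd HmN e He.
    all: destruct (Nat.eq_dec m N) as [->|Hne];
      [apply (ex_theta_ext_open _ (fun _ => 1)); auto using ex_theta_const|].
    - lia.
    - destruct (Hh m ltac:(lia)) as [Dh Hh0].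
      apply (ex_theta_ext_open _
        (fun e => - sumR (S N) (fun k => if Nat.ltb m k then x k e * c k m e else 0) * / h m e));
        auto.
      + intros e' He'. rewrite -Hrec; [field; apply Hh0|lia|]; auto.
      + apply ex_theta_mult; [apply ex_theta_opp, ex_theta_sumR|apply ex_theta_inv; auto].
        intros k Hk. destruct (Nat.ltb_spec m k); [|apply ex_theta_const].
        apply ex_theta_mult; [apply IH|apply Hc]; auto; lia. }
  intros m Hm. apply (Hd N); lia.
Qed.

End OpenSet.

(** * Moments *)

Lemma CV_radius_ge_ex_series a x :
  ex_series (fun k => a k * x ^ k) -> Rbar_le (Rabs x) (CV_radius a).
Proof.
  intros Hs. apply Rbar_not_lt_le. intros Hlt.
  exact (CV_disk_outside a x Hlt (ex_series_lim_0 _ Hs)).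
Qed.

Definition moment_coef (bs cs : list R) (p : nat) (k : nat) : R :=
  INR k ^ p * (prodR (List.map (fun b => poch b k) bs)
               / prodR (List.map (fun c => poch c k) cs) / INR (Factorial.fact k)).

Lemma moment_term_coef bs cs p x k :
  moment_term (hweight bs cs x) p k = moment_coef bs cs p k * x ^ k.
Proof. unfold moment_term, hweight, moment_coef, Rdiv. ring. Qed.

Lemma moment_series_PSeries bs cs p x :
  Series (moment_term (hweight bs cs x) p) = PSeries (moment_coef bs cs p) x.
Proof.
  unfold PSeries. apply Series_ext. intros k.
  rewrite moment_term_coef /scal /= /mult /=. ring.
Qed.

Lemma moment_series_Derive bs cs p x0 x1 : Rabs x0 < Rabs x1 ->
  ex_series (moment_term (hweight bs cs x1) p) ->
  ex_derive (fun x => Series (moment_term (hweight bs cs x) p)) x0 /\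
  x0 * Derive (fun x => Series (moment_term (hweight bs cs x) p)) x0
    = Series (moment_term (hweight bs cs x0) (S p)).
Proof.
  intros Hlt Hs.
  assert (Hr : Rbar_lt (Rabs x0) (CV_radius (moment_coef bs cs p))).
  { apply Rbar_lt_le_trans with (Rabs x1); [exact Hlt|]. apply CV_radius_ge_ex_series.
    apply: ex_series_ext Hs. intros k. apply moment_term_coef. }
  assert (E : (fun x => Series (moment_term (hweight bs cs x) p)) = PSeries (moment_coef bs cs p)).
  { extensionality x. apply moment_series_PSeries. }
  rewrite E. split; [apply ex_derive_PSeries; exact Hr|].
  rewrite Derive_PSeries // -PSeries_incr_1 moment_series_PSeries.
  apply PSeries_ext. intros [|k]; unfold PS_incr_1, PS_derive, moment_coef; simpl.
  - rewrite /zero /=. ring.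
  - ring.
Qed.

Lemma locally_farther_point (P : R -> Prop) x : locally x P ->
  exists x1, Rabs x < Rabs x1 /\ P x1.
Proof.
  intros [eps Heps]. pose proof (cond_pos eps).
  assert (Hball : forall d, Rabs d < eps -> P (x + d)).
  { intros d Hd. apply Heps. rewrite /ball /= /AbsRing_ball /abs /minus /plus /Hierarchy.opp /=.
    replace (x + d + - x) with d by ring. exact Hd. }
  destruct (Rle_dec 0 x).
  - exists (x + eps / 2). split; [rewrite !Rabs_right; lra|].
    apply Hball. rewrite Rabs_right; lra.
  - exists (x + - (eps / 2)). split; [rewrite !Rabs_left; lra|].
    apply Hball. rewrite Rabs_left; lra.
Qed.

Section Moments.
Variables (b1 b2 cs : list R) (U : R * R -> Prop).
Hypothesis HU : open U.
Hypothesis Hconv : forall eta, U eta -> forall p,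
  ex_series (moment_term (hweight b1 cs (fst eta)) p) /\
  ex_series (moment_term (hweight b2 cs (snd eta)) p).

(* Both series of the moment matrix converge at a point of [U] farther from the
   origin than [e], so [e] lies strictly inside their discs of convergence. *)
Lemma Mom_theta e n j : U e ->
  ex_theta (fun e => Mom b1 b2 cs e n j) e /\
  theta (fun e => Mom b1 b2 cs e n j) e = Mom b1 b2 cs e (S n) j.
Proof.
  intros He.
  destruct (locally_farther_point _ _ (open_locally_fst U HU e He)) as [x1 [Hx1 Ux1]].
  destruct (locally_farther_point _ _ (open_locally_snd U HU e He)) as [y1 [Hy1 Uy1]].
  destruct e as [x y]; simpl in *.
  unfold ex_theta, theta, Mom; simpl. destruct (Nat.even j).
  - destruct (moment_series_Derive b1 cs (n + Nat.div2 j) x x1 Hx1 (proj1 (Hconv _ Ux1 _)))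
      as [D E].
    split; [split; [exact D|apply ex_derive_const]|].
    rewrite Derive_const E addSn. ring.
  - destruct (moment_series_Derive b2 cs (n + Nat.div2 j) y y1 Hy1 (proj2 (Hconv _ Uy1 _)))
      as [D E].
    split; [split; [apply ex_derive_const|exact D]|].
    rewrite Derive_const E addSn. ring.
Qed.

End Moments.

Lemma Mom_shift b1 b2 cs e k l : Mom b1 b2 cs e k (S (S l)) = Mom b1 b2 cs e (S k) l.
Proof. rewrite /Mom /=. by rewrite addnS addSn. Qed.

(** * Gauss--Borel factorization *)

Definition SM (M Sm : mat) : mat := mmul Sm M.
Definition MStT (M St : mat) : mat := fun k m => sumR (S m) (fun l => M k l * St m l).
Definition jacobi (Sm L : mat) : mat := mmul (mmul Sm Lam) L.

Record gauss_borel_factors (M Sm St L K : mat) (H : nat -> R) : Prop := {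
  gbf_Sm : lower_unitri Sm;
  gbf_St : lower_unitri St;
  gbf_SmL : mmul Sm L = mid;
  gbf_StK : mmul St K = mid;
  gbf_factor : gauss_borel M Sm St H }.
Arguments gbf_Sm {M Sm St L K H}.
Arguments gbf_St {M Sm St L K H}.
Arguments gbf_SmL {M Sm St L K H}.
Arguments gbf_StK {M Sm St L K H}.
Arguments gbf_factor {M Sm St L K H}.

Section GaussBorel.
Context {M Sm St L K : mat} {H : nat -> R}.
Hypothesis HGB : gauss_borel_factors M Sm St L K H.

Let HS := gbf_Sm HGB.
Let HSt := gbf_St HGB.
Let HSl := lower_unitri_lower _ HS.
Let HStl := lower_unitri_lower _ HSt.
Let HL := lower_unitri_inv Sm L HS (gbf_SmL HGB).
Let HLl := lower_unitri_lower _ (proj1 HL).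

Lemma SM_sum n l : SM M Sm n l = sumR (S n) (fun k => Sm n k * M k l).
Proof. apply mmul_last_zero, HSl. lia. Qed.

Lemma gauss_borel_SM n m :
  sumR (S m) (fun l => SM M Sm n l * St m l) = if Nat.eqb n m then H n else 0.
Proof.
  rewrite -(gbf_factor HGB n m) sumR_swap. apply sumR_ext. intros l _.
  rewrite SM_sum sumR_mult_r. reflexivity.
Qed.

Lemma gauss_borel_MStT n m :
  sumR (S n) (fun k => Sm n k * MStT M St k m) = if Nat.eqb n m then H n else 0.
Proof.
  rewrite -(gbf_factor HGB n m). apply sumR_ext. intros k _. unfold MStT.
  rewrite sumR_mult_l. apply sumR_ext. intros; ring.
Qed.

Lemma SM_upper n m : (m < n)%coq_nat -> SM M Sm n m = 0.
Proof.
  induction m as [m IH] using lt_wf_ind. intros Hm.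
  pose proof (gauss_borel_SM n m) as E. rewrite sumR_S sumR_eq0 in E.
  - rewrite (proj2 HSt) (proj2 (Nat.eqb_neq n m)) in E; [lra|lia].
  - intros k Hk. rewrite IH; [ring|lia|lia].
Qed.

Lemma SM_diag n : SM M Sm n n = H n.
Proof.
  pose proof (gauss_borel_SM n n) as E. rewrite sumR_S sumR_eq0 in E.
  - rewrite (proj2 HSt) Nat.eqb_refl in E; lra.
  - intros k Hk. rewrite SM_upper; [ring|lia].
Qed.

Lemma MStT_lower n m : (n < m)%coq_nat -> MStT M St n m = 0.
Proof.
  induction n as [n IH] using lt_wf_ind. intros Hn.
  pose proof (gauss_borel_MStT n m) as E. rewrite sumR_S sumR_eq0 in E.
  - rewrite (proj2 HS) (proj2 (Nat.eqb_neq n m)) in E; [lra|lia].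
  - intros k Hk. rewrite IH; [ring|lia|lia].
Qed.

Lemma MStT_diag n : MStT M St n n = H n.
Proof.
  pose proof (gauss_borel_MStT n n) as E. rewrite sumR_S sumR_eq0 in E.
  - rewrite (proj2 HS) Nat.eqb_refl in E; lra.
  - intros k Hk. rewrite MStT_lower; [ring|lia].
Qed.

Lemma Sm_back_substitution n m : (m < n)%coq_nat ->
  Sm n m * H m = - sumR (S n) (fun k => if Nat.ltb m k then Sm n k * MStT M St k m else 0).
Proof.
  intros Hmn. pose proof (gauss_borel_MStT n m) as E.
  rewrite (proj2 (Nat.eqb_neq n m)) in E; [|lia].
  rewrite (sumR_split_at _ m) in E; [|lia|].
  - rewrite MStT_diag in E. lra.
  - intros k Hk. rewrite MStT_lower; [ring|lia].
Qed.

Lemma St_back_substitution n m : (n < m)%coq_nat ->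
  St m n * H n = - sumR (S m) (fun l => if Nat.ltb n l then St m l * SM M Sm n l else 0).
Proof.
  intros Hnm. pose proof (gauss_borel_SM n m) as E.
  rewrite (proj2 (Nat.eqb_neq n m)) in E; [|lia].
  rewrite (sumR_split_at _ n) in E; [|lia|].
  - rewrite SM_diag in E.
    rewrite (sumR_ext _ _ (fun l => if Nat.ltb n l then SM M Sm n l * St m l else 0)).
    + lra.
    + intros l _. destruct (Nat.ltb n l); ring.
  - intros k Hk. rewrite SM_upper; [ring|lia].
Qed.

Lemma SM_eq_H_K n l : SM M Sm n l = H n * K l n.
Proof.
  destruct (lower_unitri_inv St K HSt (gbf_StK HGB)) as [HKu HKSt].
  pose proof (lower_unitri_lower _ HKu) as HKl.
  transitivity (sumR (S l) (fun r => SM M Sm n r * mmul K St l r)).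
  { rewrite HKSt (sumR_single _ l); [|lia|].
    - rewrite mid_diag. ring.
    - intros r _ Hr. rewrite mid_offdiag; [ring|lia]. }
  transitivity (sumR (S l) (fun m => K l m * sumR (S m) (fun r => SM M Sm n r * St m r))).
  { rewrite (sumR_ext _ _ (fun r => sumR (S l) (fun m => K l m * (SM M Sm n r * St m r)))).
    - rewrite sumR_swap. apply sumR_ext. intros m Hm. rewrite sumR_mult_l.
      apply sumR_pad; [lia|]. intros r Hr _. rewrite (HStl m r); [ring|lia].
    - intros r _. rewrite mmul_last_zero; [|apply HKl; lia].
      rewrite sumR_mult_l. apply sumR_ext. intros; ring. }
  rewrite (sumR_ext _ _ (fun m => K l m * (if Nat.eqb n m then H n else 0)));
    [|intros m _; rewrite gauss_borel_SM //].
  destruct (Nat.le_gt_cases n l).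
  - rewrite (sumR_single _ n); [|lia|].
    + rewrite Nat.eqb_refl. ring.
    + intros m _ Hm. rewrite (proj2 (Nat.eqb_neq n m)); [ring|auto].
  - rewrite sumR_eq0.
    + rewrite HKl; [ring|lia].
    + intros m Hm. rewrite (proj2 (Nat.eqb_neq n m)); [ring|lia].
Qed.


Lemma mmul_L_SM : mmul L (SM M Sm) = M.
Proof.
  unfold SM. rewrite -mmul_assoc.
  - rewrite (proj2 HL). apply mmul_1l.
  - apply lower_tri_lower_hessenberg, HLl.
  - apply lower_tri_lower_hessenberg, HSl.
  - apply lower_tri_lower_hessenberg, lower_tri_mmul; [exact HLl|exact HSl].
Qed.

Lemma mmul_mmul_L_SM X : lower_tri X -> mmul (mmul X L) (SM M Sm) = mmul X M.
Proof.
  intros HX. rewrite mmul_assoc ?mmul_L_SM //.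
  - apply lower_tri_lower_hessenberg, HX.
  - apply lower_tri_lower_hessenberg, HLl.
  - apply lower_tri_lower_hessenberg, lower_tri_mmul; [exact HX|exact HLl].
Qed.

Lemma lower_hessenberg_jacobi : lower_hessenberg (jacobi Sm L).
Proof. apply lower_hessenberg_mmul_lower, HLl. Qed.

Lemma mmul_jacobi_SM : mmul (jacobi Sm L) (SM M Sm) = mmul Sm (mmul Lam M).
Proof.
  unfold jacobi. rewrite mmul_assoc ?mmul_L_SM.
  - apply mmul_assoc; [apply lower_tri_lower_hessenberg, HSl|apply lower_hessenberg_Lam|].
    apply lower_hessenberg_mmul_Lam, HSl.
  - apply lower_hessenberg_mmul_Lam, HSl.
  - apply lower_tri_lower_hessenberg, HLl.
  - exact lower_hessenberg_jacobi.
Qed.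

Lemma jacobi_superdiag n : jacobi Sm L n (S n) = 1.
Proof.
  unfold jacobi, mmul at 1. rewrite (sumR_single _ (S n)); [|lia|].
  - rewrite (proj2 (proj1 HL)) Rmult_1_r. unfold mmul, Lam.
    rewrite (sumR_single _ n); [|lia|].
    + rewrite (proj2 HS) Nat.eqb_refl. ring.
    + intros k _ Hk. rewrite (proj2 (Nat.eqb_neq _ _)); [ring|lia].
  - intros k Hk1 Hk2. rewrite (HLl k (S n)); [ring|lia].
Qed.

Lemma mmul_SM_St X n m : lower_hessenberg X ->
  sumR (S m) (fun l => mmul X (SM M Sm) n l * St m l) = X n m * H m.
Proof.
  intros HX. unfold mmul at 1.
  rewrite (sumR_ext _ _ (fun l => sumR (S (S n)) (fun r => X n r * (SM M Sm r l * St m l)))).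
  2:{ intros l _. rewrite sumR_mult_r. apply sumR_ext. intros; ring. }
  rewrite sumR_swap.
  rewrite (sumR_ext _ _ (fun r => X n r * (if Nat.eqb r m then H r else 0))).
  2:{ intros r _. rewrite -sumR_mult_l gauss_borel_SM. reflexivity. }
  destruct (Nat.lt_ge_cases m (S (S n))) as [Hm|Hm].
  - rewrite (sumR_single _ m) ?Nat.eqb_refl //.
    intros k _ Hk. rewrite (proj2 (Nat.eqb_neq _ _)); [ring|auto].
  - rewrite sumR_eq0.
    + rewrite HX; [ring|lia].
    + intros k Hk. rewrite (proj2 (Nat.eqb_neq _ _)); [ring|lia].
Qed.

Lemma SM_mmul_strictly_lower Y n m : strictly_lower_tri Y ->
  sumR (S m) (fun l => SM M Sm n l * Y m l) = H n * mmul Y K m n.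
Proof.
  intros HY. rewrite mmul_last_zero; [|apply HY; lia].
  rewrite sumR_mult_l. apply sumR_ext. intros l _. rewrite SM_eq_H_K. ring.
Qed.

(* If [H n] vanished, row [n] of [Sm] (whose last entry is 1) would be a
   nonzero vector in the left kernel of the [n+1]-th leading block of [M]. *)
Lemma H_neq0_lead_minor n : lead_minor M (S n) <> 0 -> H n <> 0.
Proof.
  intros Hmin HHn. apply Hmin. apply/eqP. apply/det0P.
  exists (\row_(k < S n) Sm n (nat_of_ord k))%R.
  - apply/negP => /eqP E. have := congr1 (fun v : 'rV[R]_(S n) => v ord0 ord_max) E.
    rewrite !mxE /= (proj2 HS). exact R1_neq_R0.
  - apply/rowP => l. rewrite !mxE.
    transitivity (SM M Sm n (nat_of_ord l)).
    + rewrite SM_sum -big_sumR. apply eq_bigr => k _. rewrite !mxE. reflexivity.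
    + pose proof (ltn_ord l) as Hl.
      destruct (Nat.eq_dec (nat_of_ord l) n) as [->|Hne].
      * rewrite SM_diag HHn. reflexivity.
      * rewrite SM_upper; [reflexivity|lia].
Qed.

Hypothesis HMshift : forall k l, M k (S (S l)) = M (S k) l.
Hypothesis HH : forall n, H n <> 0.

(* From [Lam M = M (Lam^T)^2]: [jacobi Sm L * SM M Sm = Sm M (Lam^T)^2] vanishes
   below the second subdiagonal, and [SM M Sm] is upper triangular with nonzero
   diagonal. *)
Lemma jacobi_lower_band n l : (l + 3 <= n)%coq_nat -> jacobi Sm L n l = 0.
Proof.
  induction l as [l IH] using lt_wf_ind. intros Hl.
  assert (E : mmul (jacobi Sm L) (SM M Sm) n l = SM M Sm n (S (S l))).
  { rewrite mmul_jacobi_SM SM_sum mmul_last_zero; [|apply HSl; lia].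
    apply sumR_ext. intros k _. rewrite mmul_Lam_l HMshift. reflexivity. }
  rewrite SM_upper in E; [|lia].
  unfold mmul in E. rewrite (sumR_pad (S l)) in E; [|lia|].
  - rewrite sumR_S sumR_eq0 in E.
    + rewrite SM_diag in E. apply (Rmult_eq_reg_r (H l)); [lra|apply HH].
    + intros k Hk. rewrite IH; [ring|lia|lia].
  - intros k Hk _. rewrite (SM_upper k l); [ring|lia].
Qed.

End GaussBorel.

(** * Differentiating the factorization *)

Section Factors.
Variables (b1 b2 cs : list R) (U : R * R -> Prop).
Hypothesis HU : open U.
Hypothesis Hconv : forall eta, U eta -> forall p,
  ex_series (moment_term (hweight b1 cs (fst eta)) p) /\
  ex_series (moment_term (hweight b2 cs (snd eta)) p).
Hypothesis Hminors : forall eta, U eta -> forall N : nat, lead_minor (Mom b1 b2 cs eta) N <> 0.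
Variables (Sm St Sinv Stinv : R * R -> mat) (H : R * R -> nat -> R).
Hypothesis HGB : forall e, U e ->
  gauss_borel_factors (Mom b1 b2 cs e) (Sm e) (St e) (Sinv e) (Stinv e) (H e).

Local Notation Mv e := (Mom b1 b2 cs e).

Lemma H_neq0 e n : U e -> H e n <> 0.
Proof. intros He. apply (H_neq0_lead_minor (HGB e He)), Hminors, He. Qed.

Lemma ex_theta_Mom e n j : U e -> ex_theta (fun e => Mv e n j) e.
Proof. intros He. exact (proj1 (Mom_theta b1 b2 cs U HU Hconv e n j He)). Qed.

Lemma ex_theta_factors N :
  (forall j, ex_theta_on U (fun e => Sm e N j)) /\
  (forall j, ex_theta_on U (fun e => St e N j)) /\ ex_theta_on U (fun e => H e N).
Proof.
  induction N as [N IH] using lt_wf_ind.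
  assert (HH : forall m, (m < N)%coq_nat ->
            ex_theta_on U (H ^~ m) /\ forall e, U e -> H e m <> 0).
  { intros m Hm. split; [exact (proj2 (proj2 (IH m Hm)))|intros e He; apply H_neq0, He]. }
  assert (DSm : forall j, ex_theta_on U (fun e => Sm e N j)).
  { intros j. destruct (Nat.le_gt_cases j N) as [Hj|Hj].
    - apply (ex_theta_back_substitution U HU (fun m e => Sm e N m)
               (fun k m e => MStT (Mv e) (St e) k m) (fun m e => H e m) N); auto.
      + intros e He. exact (proj2 (gbf_Sm (HGB e He)) N).
      + intros m e Hm He. exact (Sm_back_substitution (HGB e He) N m Hm).
      + intros k m Hmk HkN e He. apply ex_theta_sumR. intros l Hl.
        apply ex_theta_mult; [apply ex_theta_Mom, He|apply (proj1 (proj2 (IH m ltac:(lia)))), He].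
    - intros e He. apply (ex_theta_ext_open U HU _ (fun _ => 0)); auto using ex_theta_const.
      intros e' He'. apply (lower_unitri_lower _ (gbf_Sm (HGB e' He'))), Hj. }
  assert (DH : ex_theta_on U (fun e => H e N)).
  { intros e He. apply (ex_theta_ext_open U HU _ (fun e => SM (Mv e) (Sm e) N N)); auto.
    - intros e' He'. symmetry. apply (SM_diag (HGB e' He')).
    - apply ex_theta_sumR. intros k Hk. apply ex_theta_mult; [apply DSm|apply ex_theta_Mom]; auto. }
  split; [exact DSm|split; [|exact DH]].
  intros j. destruct (Nat.le_gt_cases j N) as [Hj|Hj].
  - apply (ex_theta_back_substitution U HU (fun m e => St e N m)
             (fun k m e => SM (Mv e) (Sm e) m k) (fun m e => H e m) N); auto.
    + intros e He. exact (proj2 (gbf_St (HGB e He)) N).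
    + intros m e Hm He. exact (St_back_substitution (HGB e He) m N Hm).
    + intros k m Hmk HkN e He. apply ex_theta_sumR. intros l Hl.
      apply ex_theta_mult; [apply (proj1 (IH m ltac:(lia)))|apply ex_theta_Mom]; auto.
  - intros e He. apply (ex_theta_ext_open U HU _ (fun _ => 0)); auto using ex_theta_const.
    intros e' He'. apply (lower_unitri_lower _ (gbf_St (HGB e' He'))), Hj.
Qed.

Lemma ex_theta_Sm e n k : U e -> ex_theta (fun e => Sm e n k) e.
Proof. intros He. exact (proj1 (ex_theta_factors n) k e He). Qed.

Lemma ex_theta_St e n k : U e -> ex_theta (fun e => St e n k) e.
Proof. intros He. exact (proj1 (proj2 (ex_theta_factors n)) k e He). Qed.

Lemma ex_theta_SM e n l : U e -> ex_theta (fun e => SM (Mv e) (Sm e) n l) e.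
Proof.
  intros He. unfold SM, mmul. apply ex_theta_sumR. intros k _.
  apply ex_theta_mult; [apply ex_theta_Sm|apply ex_theta_Mom]; auto.
Qed.

Local Notation phi e := (mmul (theta_mat Sm e) (Sinv e)).
Local Notation J e := (jacobi (Sm e) (Sinv e)).

Lemma theta_SM e n l : U e ->
  theta (fun e => SM (Mv e) (Sm e) n l) e = mmul (madd (phi e) (J e)) (SM (Mv e) (Sm e)) n l.
Proof.
  intros He. pose proof (HGB e He) as D.
  assert (HthetaS : lower_tri (theta_mat Sm e)).
  { apply strictly_lower_tri_lower, (theta_lower_unitri U HU); [exact He|].
    intros e' He'. exact (gbf_Sm (HGB e' He')). }
  unfold SM at 1, mmul at 1. rewrite theta_sumR.
  2:{ intros k _. apply ex_theta_mult; [apply ex_theta_Sm|apply ex_theta_Mom]; auto. }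
  rewrite (sumR_ext _ _ (fun k => theta_mat Sm e n k * Mv e k l + Sm e n k * Mv e (S k) l)).
  2:{ intros k _. rewrite theta_mult; [|apply ex_theta_Sm|apply ex_theta_Mom]; auto.
      rewrite (proj2 (Mom_theta b1 b2 cs U HU Hconv e k l He)). reflexivity. }
  rewrite sumR_plus mmul_maddl /madd (mmul_mmul_L_SM D _ HthetaS) (mmul_jacobi_SM D).
  f_equal. apply sumR_ext. intros k _. rewrite mmul_Lam_l. reflexivity.
Qed.

(* [theta] applied to [Sm M St^T = H], using [theta M = Lam M]. *)
Lemma theta_gauss_borel e n m : U e ->
  (phi e n m + J e n m) * H e m + H e n * mmul (theta_mat St e) (Stinv e) m n
  = if Nat.eqb n m then theta_vec H e n else 0.
Proof.
  intros He. pose proof (HGB e He) as D.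
  assert (HSt : forall e', U e' -> lower_unitri (St e')).
  { intros e' He'. exact (gbf_St (HGB e' He')). }
  transitivity (theta (fun e => sumR (S m) (fun l => SM (Mv e) (Sm e) n l * St e m l)) e).
  2:{ rewrite (theta_ext_open U HU _ (fun e => if Nat.eqb n m then H e n else 0) e He).
      - destruct (Nat.eqb n m); [reflexivity|apply theta_const].
      - intros e' He'. apply (gauss_borel_SM (HGB e' He')). }
  rewrite theta_sumR.
  2:{ intros l _. apply ex_theta_mult; [apply ex_theta_SM|apply ex_theta_St]; auto. }
  rewrite (sumR_ext _ _ (fun l => mmul (madd (phi e) (J e)) (SM (Mv e) (Sm e)) n l * St e m l
                                 + SM (Mv e) (Sm e) n l * theta_mat St e m l)).
  2:{ intros l _. rewrite theta_mult ?theta_SM //; [apply ex_theta_SM|apply ex_theta_St]; exact He. }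
  rewrite sumR_plus (SM_mmul_strictly_lower D); [|apply (theta_lower_unitri U HU); auto].
  rewrite (mmul_SM_St D); [reflexivity|].
  apply lower_hessenberg_madd; [|apply (lower_hessenberg_jacobi D)].
  apply lower_hessenberg_mmul_lower, lower_unitri_lower.
  exact (proj1 (lower_unitri_inv _ _ (gbf_Sm D) (gbf_SmL D))).
Qed.

End Factors.

(** * Reading off the identities *)

Section ThetaIdentity.
Variables (phi phit J : mat) (h dh : nat -> R).
Hypotheses (Hphi : strictly_lower_tri phi) (Hphit : strictly_lower_tri phit)
  (HJ : lower_hessenberg J) (HJsup : forall n, J n (S n) = 1)
  (HJband : forall n l, (l + 3 <= n)%coq_nat -> J n l = 0)
  (Hh : forall n, h n <> 0)
  (Hid : forall n m, (phi n m + J n m) * h m + h n * phit m n = if Nat.eqb n m then dh n else 0).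

Lemma theta_identity_diag : mmul (diagm dh) (diagm (fun n => / h n)) = diagm (fun n => J n n).
Proof.
  rewrite mmul_diagm. extensionality i; extensionality j. unfold diagm.
  destruct (Nat.eqb_spec i j) as [<-|Hij]; [|reflexivity].
  pose proof (Hid i i) as E. rewrite Nat.eqb_refl Hphi ?Hphit in E; [|lia|lia].
  rewrite -E. field. apply Hh.
Qed.

Lemma theta_identity_lower :
  mopp phi = madd (mmul (mmul LamT LamT) (diagm (fun n => J (S (S n)) n)))
                  (mmul LamT (diagm (fun n => J (S n) n))).
Proof.
  assert (HLamT2 : lower_hessenberg (mmul LamT LamT)).
  { intros i k Hik. rewrite mmul_LamT_l. destruct i as [|i']; [reflexivity|].
    apply lower_hessenberg_LamT. lia. }
  extensionality i; extensionality j. unfold mopp, madd.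
  rewrite !mmul_diagm_r ?mmul_LamT_l //; [|exact lower_hessenberg_LamT].
  unfold LamT, Lam. destruct (Nat.lt_ge_cases j i) as [Hji|Hij].
  - assert (Ephi : phi i j = - J i j).
    { pose proof (Hid i j) as E.
      rewrite (proj2 (Nat.eqb_neq i j)) in E; [|lia].
      rewrite Hphit in E; [|lia].
      apply (Rmult_eq_reg_r (h j)); [lra|apply Hh]. }
    rewrite Ephi. destruct i as [|i']; [lia|]. change (S i' =? S j) with (i' =? j).
    destruct (Nat.eqb_spec i' j) as [->|Hs]; [rewrite (proj2 (Nat.eqb_neq _ _)); [ring|lia]|].
    destruct (Nat.eqb_spec i' (S j)) as [->|Hs2]; [ring|].
    rewrite HJband; [ring|lia].
  - rewrite Hphi; [|lia]. destruct i as [|i']; [simpl; ring|].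
    rewrite !(proj2 (Nat.eqb_neq _ _)); [ring|lia|lia].
Qed.

Lemma theta_identity_upper :
  mopp phit = mmul LamT (mmul (diagm (fun n => h (S n))) (diagm (fun n => / h n))).
Proof.
  extensionality i; extensionality j. unfold mopp.
  rewrite mmul_LamT_l mmul_diagm. destruct i as [|i'].
  - rewrite Hphit; [ring|lia].
  - unfold diagm. destruct (Nat.eqb_spec i' j) as [<-|Hne].
    + pose proof (Hid i' (S i')) as E.
      rewrite (proj2 (Nat.eqb_neq _ _)) in E; [|lia].
      rewrite Hphi ?HJsup in E; [|lia].
      apply (Rmult_eq_reg_l (h i')); [|apply Hh].
      field_simplify; [lra|apply Hh].
    + destruct (Nat.le_gt_cases (S i') j) as [Hle|Hgt]; [rewrite Hphit; [ring|lia]|].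
      pose proof (Hid j (S i')) as E.
      rewrite (proj2 (Nat.eqb_neq _ _)) in E; [|lia].
      rewrite Hphi ?HJ in E; [|lia|lia].
      assert (Hz : h j * phit (S i') j = 0) by lra.
      apply Rmult_integral in Hz as [Hz|Hz]; [exfalso; apply (Hh j), Hz|].
      rewrite Hz. ring.
Qed.

End ThetaIdentity.

Theorem mainTheorem16
  (b1 b2 cs : list R)
  (* the c_j are not non-positive integers, so the weights are defined *)
  (Hc : forall c, List.In c cs -> forall k, poch c k <> 0)
  (* open region of (eta1, eta2) on which everything below holds *)
  (U : R * R -> Prop) (HU : open U)
  (* convergent moment series *)
  (Hconv : forall eta, U eta -> forall p,
      ex_series (moment_term (hweight b1 cs (fst eta)) p) /\
      ex_series (moment_term (hweight b2 cs (snd eta)) p))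
  (* all leading principal minors nonzero *)
  (Hminors : forall eta, U eta -> forall N : nat,
      lead_minor (Mom b1 b2 cs eta) N <> 0)
  (* Gauss--Borel factorization M = S^{-1} H St^{-T}, depending on eta *)
  (Sm St Sinv Stinv : R * R -> mat) (H : R * R -> nat -> R)
  (HS : forall eta, U eta -> lower_unitri (Sm eta))
  (HSt : forall eta, U eta -> lower_unitri (St eta))
  (HSinv : forall eta, U eta -> mmul (Sm eta) (Sinv eta) = mid)
  (HStinv : forall eta, U eta -> mmul (St eta) (Stinv eta) = mid)
  (HGB : forall eta, U eta -> gauss_borel (Mom b1 b2 cs eta) (Sm eta) (St eta) (H eta)) :
  forall eta, U eta ->
    let J := mmul (mmul (Sm eta) Lam) (Sinv eta) in      (* S Lambda S^{-1} *)
    let alpha := fun n => J n n in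
    let beta := fun n => J (S n) n in
    let gamma := fun n => J (S (S n)) n in
    let phi := mmul (theta_mat Sm eta) (Sinv eta) in
    let phit := mmul (theta_mat St eta) (Stinv eta) in
    (* (theta H) H^{-1} = alpha *)
    mmul (diagm (theta_vec H eta)) (diagm (fun n => / H eta n)) = diagm alpha /\
    (* - phi = (Lambda^T)^2 gamma + Lambda^T beta *)
    mopp phi = madd (mmul (mmul LamT LamT) (diagm gamma)) (mmul LamT (diagm beta)) /\
    (* - phit = Lambda^T (a_- H) H^{-1} *)
    mopp phit = mmul LamT (mmul (diagm (fun n => H eta (S n))) (diagm (fun n => / H eta n))).
Proof.
  intros eta He. cbv zeta.
  pose (GBF e (He : U e) := Build_gauss_borel_factors _ _ _ _ _ _
         (HS e He) (HSt e He) (HSinv e He) (HStinv e He) (HGB e He)).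
  pose proof (strictly_lower_theta_mmul_inv U HU Sm Sinv eta He HS (HSinv eta He)) as Hphi.
  pose proof (strictly_lower_theta_mmul_inv U HU St Stinv eta He HSt (HStinv eta He)) as Hphit.
  pose proof (fun n => H_neq0 b1 b2 cs U Hminors Sm St Sinv Stinv H GBF eta n He) as HH.
  pose proof (fun n m => theta_gauss_borel b1 b2 cs U HU Hconv Hminors
                           Sm St Sinv Stinv H GBF eta n m He) as Hid.
  split; [|split].
  - exact (theta_identity_diag _ _ _ _ _ Hphi Hphit HH Hid).
  - exact (theta_identity_lower _ _ _ _ _ Hphi Hphit
             (jacobi_lower_band (GBF eta He) (Mom_shift b1 b2 cs eta) HH) HH Hid).
  - exact (theta_identity_upper _ _ _ _ _ Hphi Hphit (lower_hessenberg_jacobi (GBF eta He))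
             (jacobi_superdiag (GBF eta He)) HH Hid).
Qed.
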